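(* Let $n\ge1$ and $d\ge0$. The map $\phi\colon\mathsf{PB}_{n,d}\to\mathsf{C}_{n,d}$ is a bijection.
   Context: A composition is a finite sequence of positive integers $\beta=(\beta_1,\dots,\beta_k)$, with length $\bm{l}(\beta)=k$ and size $|\beta|=\sum\beta_i$ (the empty composition is allowed). A partition is a weakly decreasing composition $\lambda=(\lambda_1\ge\lambda_2\ge\cdots)$. A composition $\alpha$ is inverting if for each integer $i$ with $1<i\le\max_j\alpha_j$ there exist indices $s<t$ with $\alpha_s=i$ and $\alpha_t=i-1$. Every composition factors uniquely as $\alpha=\gamma\,k^{i_k}\cdots2^{i_2}1^{i_1}$ (concatenation, $i_j\ge1$) with $\gamma$ a composition containing none of the values $1,\dots,k$ and $k\ge0$ maximal; $\alpha$ is pure if this $k$ is even. $\mathsf{B}_n$ is the set of pure and inverting compositions of length at most $n$. $\mathsf{C}_{n,d}$ is the set of compositions of $d$ with at most $n$ parts, and $\mathsf{PB}_{n,d}=\{(\lambda,\beta):\lambda$ a partition, $\beta\in\mathsf{B}_n$, $|\lambda|+|\beta|=d$, $\bm{l}(\lambda)\le n$, $\bm{l}(\beta)\le n\}$. For $(\lambda,\beta)\in\mathsf{PB}_{n,d}$, $\phi(\lambda,\beta)$ is defined as follows: if $\bm{l}(\lambda)>\bm{l}(\beta)$, first append $\bm{l}(\lambda)-\bm{l}(\beta)$ zeros after the last part of $\beta$. Then, for each $1\le i\le\bm{l}(\lambda)$, add $\lambda_i$ to the $i$-th largest part of (the padded) $\beta$, where parts are compared by value and, when $\beta_j=\beta_k$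 with $j<k$, the part $\beta_j$ is considered smaller than $\beta_k$. The resulting composition is $\phi(\lambda,\beta)$. *)

From mathcomp Require Import all_boot.
Set Implicit Arguments. Unset Strict Implicit. Unset Printing Implicit Defensive.

Definition is_composition (a : seq nat) : bool := all (fun x => 0 < x) a.

Definition is_partition (l : seq nat) : bool :=
  is_composition l && sorted geq l.

Definition inverting (a : seq nat) : Prop :=
  forall i, 1 < i -> i <= \max_(x <- a) x ->
    exists s t, [/\ s < t, t < size a, nth 0 a s = i & nth 0 a t = i.-1].

(* alpha factors as gamma k^{e_1} (k-1)^{e_2} ... 1^{e_k}, all e_j >= 1,
   with gamma containing none of the values 1..k. *)
Definition factors_with (a : seq nat) (k : nat) : Prop :=
  exists (g e : seq nat),
    [/\ is_composition g, all (fun x => k < x) g,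
        size e = k, all (fun x => 0 < x) e &
        a = g ++ flatten [seq nseq (nth 0 e j) (k - j) | j <- iota 0 k]].

Definition pure (a : seq nat) : Prop :=
  exists k, [/\ factors_with a k, (forall k', factors_with a k' -> k' <= k)
              & ~~ odd k].

Definition in_B (n : nat) (b : seq nat) : Prop :=
  [/\ is_composition b, pure b, inverting b & size b <= n].

Definition in_C (n d : nat) (c : seq nat) : Prop :=
  [/\ is_composition c, sumn c = d & size c <= n].

Definition in_PB (n d : nat) (p : seq nat * seq nat) : Prop :=
  [/\ is_partition p.1, in_B n p.2, sumn p.1 + sumn p.2 = d,
      size p.1 <= n & size p.2 <= n].

Definition pad_beta (l b : seq nat) : seq nat :=
  b ++ nseq (size l - size b) 0.

(* 0-based rank of position j in b: number of positions k that are larger,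
   where k is larger than j iff b_k > b_j, or b_k = b_j and k > j. *)
Definition rank_in (b : seq nat) (j : nat) : nat :=
  count (fun k => (nth 0 b j < nth 0 b k) ||
                  ((nth 0 b k == nth 0 b j) && (j < k)))
        (iota 0 (size b)).

(* phi(lambda, beta): add lambda_i to the i-th largest part of padded beta *)
Definition phi (p : seq nat * seq nat) : seq nat :=
  let b := pad_beta p.1 p.2 in
  [seq nth 0 b j + nth 0 p.1 (rank_in b j) | j <- iota 0 (size b)].

From mathcomp Require Import all_boot zify.
From Stdlib Require Import Classical.
Set Implicit Arguments. Unset Strict Implicit. Unset Printing Implicit Defensive.

(** As
   lambda is weakly decreasing, phi(lambda, beta) has the same relative order of
   parts (ties broken by position) as padded beta, and its size is
   |lambda| + |beta|.

   Injectivity: an inverting composition is the pointwise least sequence of its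
   order class, so two pure inverting betas with order-equivalent paddings
   coincide, unless exactly one of them is padded; then minimality forces the
   other to be the first raised by one and followed by ones, which flips purity.
   Knowing beta and the ranks, lambda is read off.

   Surjectivity, by induction on |c|: a pure inverting c is phi(∅, c); an impure
   inverting c is beta raised by one and followed by ones with beta pure, i.e.
   phi(1^l(c), beta); if c is not inverting, some v > 1 has all its parts v - 1
   before its parts v, so lowering the parts >= v by one keeps the order, and a
   preimage of the lowered composition gives one of c after adding 1 to the
   first #{parts >= v} parts of lambda. *)

(** * Ranks and relative order of positions *)

Definition above (b : seq nat) j k :=
  (nth 0 b j < nth 0 b k) || ((nth 0 b k == nth 0 b j) && (j < k)).

Lemma rank_inE b j : rank_in b j = count (above b j) (iota 0 (size b)).
Proof. by []. Qed.

Lemma above_irr b j : above b j j = false.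
Proof. rewrite /above; lia. Qed.

Lemma above_trans b j k l : above b j k -> above b k l -> above b j l.
Proof. rewrite /above; lia. Qed.

Lemma above_asym b j k : above b j k -> above b k j = false.
Proof. rewrite /above; lia. Qed.

Lemma above_total b j k : j != k -> above b j k || above b k j.
Proof. rewrite /above; lia. Qed.

Definition same_order (b c : seq nat) :=
  size b = size c /\
  forall j k, j < size b -> k < size b -> above b j k = above c j k.

Lemma same_order_sym b c : same_order b c -> same_order c b.
Proof. by case=> e H; split=> // j k; rewrite -e => hj hk; rewrite H. Qed.

Lemma same_order_trans b c e : same_order b c -> same_order c e -> same_order b e.
Proof.
case=> e1 H1 [e2 H2]; split; first by rewrite e1.
by move=> j k hj hk; rewrite H1 // H2 // -e1.
Qed.

Lemma same_order_above b c j k : same_order b c -> j < size b -> k < size b ->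
  above b j k -> above c j k.
Proof. by case=> _ H hj hk; rewrite H. Qed.

Lemma same_order_mono b c : size b = size c ->
  (forall j k, j < size b -> k < size b -> above b j k -> above c j k) ->
  same_order b c.
Proof.
move=> e H; split=> // j k hj hk.
case hb: (above b j k); first by rewrite H.
have [-> | njk] := eqVneq j k; first by rewrite above_irr.
move: (above_total b njk); rewrite hb /= => hkj.
by rewrite above_asym // H.
Qed.

Lemma same_order_rank b c j : j < size b -> same_order b c ->
  rank_in b j = rank_in c j.
Proof.
move=> hj [e H]; rewrite !rank_inE -e; apply: eq_in_count => k.
by rewrite mem_iota add0n => hk; apply: H.
Qed.

Lemma count_sub_lt (T : eqType) (a1 a2 : pred T) (s : seq T) x :
  subpred a1 a2 -> x \in s -> a2 x -> ~~ a1 x -> count a1 s < count a2 s.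
Proof.
move=> sub; elim: s => //= y s IH; rewrite inE => /orP [/eqP <- | xs] h2 h1.
  by rewrite h2 (negbTE h1) add0n add1n ltnS; exact: sub_count.
have := IH xs h2 h1; case h: (a1 y); first by rewrite (sub _ h).
by rewrite add0n => /leq_trans; apply; apply: leq_addl.
Qed.

Lemma rank_in_above b j k : j < size b -> k < size b -> above b j k ->
  rank_in b k < rank_in b j.
Proof.
move=> hj hk hjk; rewrite !rank_inE; apply: (@count_sub_lt _ _ _ _ k).
- by move=> l; apply: above_trans.
- by rewrite mem_iota.
- done.
- by rewrite above_irr.
Qed.

Lemma rank_in_lt_size b j : j < size b -> rank_in b j < size b.
Proof.
move=> hj; rewrite rank_inE -[X in _ < X](size_iota 0) -(count_predT (iota _ _)).
by apply: (@count_sub_lt _ _ _ _ j); rewrite ?mem_iota ?above_irr.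
Qed.

Lemma rank_in_inj b j k : j < size b -> k < size b ->
  rank_in b j = rank_in b k -> j = k.
Proof.
move=> hj hk e; apply/eqP; apply: contraT => njk.
case/orP: (above_total b njk) => h.
  by have := rank_in_above hj hk h; rewrite e ltnn.
by have := rank_in_above hk hj h; rewrite e ltnn.
Qed.

Lemma perm_rank_in b :
  perm_eq (map (rank_in b) (iota 0 (size b))) (iota 0 (size b)).
Proof.
have U : uniq (map (rank_in b) (iota 0 (size b))).
  rewrite map_inj_in_uniq ?iota_uniq // => j k.
  rewrite !mem_iota !add0n; exact: rank_in_inj.
have S : {subset map (rank_in b) (iota 0 (size b)) <= iota 0 (size b)}.
  move=> r /mapP [j]; rewrite !mem_iota !add0n => hj ->; exact: rank_in_lt_size.
have [_ E] := uniq_min_size U S (eq_leq (esym (size_map _ _))).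
by apply: uniq_perm; rewrite ?iota_uniq.
Qed.

Lemma rank_in_surj b r : r < size b -> exists2 j, j < size b & rank_in b j = r.
Proof.
move=> hr; have : r \in map (rank_in b) (iota 0 (size b)).
  by rewrite (perm_mem (perm_rank_in b)) mem_iota.
by case/mapP => j; rewrite mem_iota add0n => hj ->; exists j.
Qed.

Lemma nth_sorted_geq (l : seq nat) i j : sorted geq l -> i <= j ->
  nth 0 l j <= nth 0 l i.
Proof.
move=> so hij; case: (ltnP j (size l)) => hj; last by rewrite nth_default.
apply: (sorted_leq_nth (leT := geq)) => //; rewrite ?inE //; last exact: leq_ltn_trans hj.
- by move=> a c e h1 h2; apply: leq_trans h2 h1.
- exact: leqnn.
Qed.

Lemma sumn_nth_iota s m : size s <= m -> \sum_(r <- iota 0 m) nth 0 s r = sumn s.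
Proof.
move=> h; rewrite -(subnKC h) iotaD big_cat /= add0n.
rewrite [X in _ + X]big1_seq ?addn0; last first.
  by move=> i /andP [_]; rewrite mem_iota => /andP [hi _]; rewrite nth_default.
by rewrite sumnE -[s in RHS](mkseq_nth 0) /mkseq big_map.
Qed.

Lemma bigmax_geE i s : 0 < i -> (i <= \max_(x <- s) x) = has (fun x => i <= x) s.
Proof.
move=> hi; elim: s => [|y s IH]; first by rewrite big_nil /=; lia.
by rewrite big_cons leq_max IH.
Qed.

Lemma nth_pad0 (s : seq nat) e j : nth 0 (s ++ nseq e 0) j = nth 0 s j.
Proof.
rewrite nth_cat; case: ltnP => // h.
by rewrite nth_nseq nth_default //; case: ifP.
Qed.

Lemma nth_composition_gt0 c j : is_composition c -> j < size c -> 0 < nth 0 c j.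
Proof. by move=> /allP cc hj; apply: cc; exact: mem_nth. Qed.

Lemma size_pad_beta l b : size (pad_beta l b) = maxn (size l) (size b).
Proof. rewrite /pad_beta size_cat size_nseq; lia. Qed.

Lemma size_phi p : size (phi p) = size (pad_beta p.1 p.2).
Proof. by rewrite /phi size_map size_iota. Qed.

Lemma nth_phi p j : j < size (pad_beta p.1 p.2) ->
  nth 0 (phi p) j =
  nth 0 (pad_beta p.1 p.2) j + nth 0 p.1 (rank_in (pad_beta p.1 p.2) j).
Proof. by move=> hj; rewrite /phi (nth_map 0) ?size_iota // nth_iota. Qed.

Lemma same_order_phi p : sorted geq p.1 -> same_order (pad_beta p.1 p.2) (phi p).
Proof.
move=> so; set b := pad_beta p.1 p.2.
apply: same_order_mono; first by rewrite size_phi.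
move=> j k hj hk hjk; have := nth_sorted_geq so (ltnW (rank_in_above hj hk hjk)).
by move: hjk; rewrite /above !nth_phi // -/b; lia.
Qed.

Lemma sumn_phi p : sumn (phi p) = sumn p.1 + sumn p.2.
Proof.
set b := pad_beta p.1 p.2.
rewrite /phi -/b sumnE big_map big_split /= addnC.
have -> : \sum_(j <- iota 0 (size b)) nth 0 b j = sumn p.2.
  rewrite -(big_map (nth 0 b) predT id) -sumnE -/(mkseq _ _) (mkseq_nth 0).
  by rewrite /b /pad_beta sumn_cat sumn_nseq addn0.
rewrite -(big_map (rank_in b) predT (nth 0 p.1)) (perm_big _ (perm_rank_in b)).
by rewrite sumn_nth_iota // /b size_pad_beta leq_maxl.
Qed.

Lemma phi_nil c : phi ([::], c) = c.
Proof.
apply: (eq_from_nth (x0 := 0)); rewrite size_phi /pad_beta /= ?sub0n ?cats0 //.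
by move=> j hj; rewrite nth_phi /pad_beta /= ?sub0n ?cats0 ?nth_nil ?addn0.
Qed.

(** * Minimality of inverting compositions *)

Section InvertingMin.

Variables (b x : seq nat) (e : nat).
Hypotheses (cb : is_composition b) (ib : inverting b).
Hypothesis so : same_order (b ++ nseq e 0) x.

Let size_pad : size (b ++ nseq e 0) = size b + e.
Proof. by rewrite size_cat size_nseq. Qed.

Let above_x j k : j < size b + e -> k < size b + e ->
  above (b ++ nseq e 0) j k -> above x j k.
Proof. by rewrite -size_pad; apply: same_order_above. Qed.

(* Induction on the value: for a part v + 2, inverting provides s < t with
   b_s = v + 2 and b_t = v + 1; the part lies above t if it precedes t, and
   above s otherwise. *)
Lemma inverting_le_nth_pos : (forall j, j < size b -> 0 < nth 0 x j) ->
  forall v j, j < size b -> nth 0 b j = v.+1 -> v.+1 <= nth 0 x j.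
Proof.
move=> base; elim=> [|v IH] j hj hv; first exact: base.
have hmax : v.+2 <= \max_(y <- b) y.
  by rewrite bigmax_geE //; apply/hasP; exists (nth 0 b j); rewrite ?mem_nth ?hv.
have [s [t [hst ht hs htv]]] := ib (isT : 1 < v.+2) hmax.
have IHt := IH t ht htv.
have below_t j' : j' < t -> nth 0 b j' = v.+2 -> v.+2 <= nth 0 x j'.
  move=> hj't hj'v; have := @above_x t j'; rewrite /above !nth_pad0; lia.
have [hjt | htj] := ltnP j t; first exact: below_t.
have hs2 := below_t s hst hs.
have := @above_x s j; rewrite /above !nth_pad0 //; lia.
Qed.

Lemma inverting_le_nth : 0 < e \/ all (fun y => 0 < y) x ->
  forall j, nth 0 (b ++ nseq e 0) j <= nth 0 x j.
Proof.
move=> hpos j; rewrite nth_pad0; have [hj | hj] := ltnP j (size b); last first.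
  by rewrite nth_default.
have := nth_composition_gt0 cb hj.
case E: (nth 0 b j) => [|v] // _.
apply: inverting_le_nth_pos E => // k hk; case: hpos => [he | /allP ax].
  have := @above_x (size b) k; rewrite /above !nth_pad0 (nth_default 0 (leqnn _)).
  have := nth_composition_gt0 cb hk; lia.
by apply: ax; apply: mem_nth; case: so => <-; rewrite size_pad; lia.
Qed.

End InvertingMin.

(** * Factorizations and purity *)

Definition stairs k (e : seq nat) :=
  flatten [seq nseq (nth 0 e j) (k - j) | j <- iota 0 k].

Definition raise (b : seq nat) t := map succn b ++ nseq t 1.

Lemma stairs_rcons k e t : size e = k ->
  stairs k.+1 (rcons e t) = map succn (stairs k e) ++ nseq t 1.
Proof.
move=> se; rewrite /stairs -addn1 iotaD map_cat flatten_cat /= add0n.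
rewrite nth_rcons se ltnn eqxx addn1 subSnn cats0; congr (_ ++ _).
rewrite map_flatten -map_comp; congr flatten; apply/eq_in_map => j.
by rewrite mem_iota add0n /= => hj; rewrite map_nseq nth_rcons se hj subSn // ltnW.
Qed.

Lemma stairs_composition k e : is_composition (stairs k e).
Proof.
apply/allP => x /flattenP [s /mapP [j]]; rewrite mem_iota add0n => /andP [_ hj] ->.
by move/nseqP => [-> _]; rewrite subn_gt0.
Qed.

Lemma size_stairs k e : size e = k -> size (stairs k e) = sumn e.
Proof.
move=> <-; rewrite /stairs size_flatten /shape -map_comp.
rewrite (eq_map (g := nth 0 e)); last by move=> j /=; rewrite size_nseq.
by rewrite -/(mkseq _ _) mkseq_nth.
Qed.

Lemma factors_with_composition a k : factors_with a k -> is_composition a.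
Proof.
case=> g [e] [cg _ _ _ ->]; rewrite /is_composition all_cat.
by apply/andP; split; [exact: cg | exact: stairs_composition].
Qed.

Lemma factors_with0 a : is_composition a -> factors_with a 0.
Proof. by move=> ca; exists a, [::]; rewrite /= cats0. Qed.

Lemma factors_with_leq_size a k : factors_with a k -> k <= size a.
Proof.
case=> g [e] [_ _ se pe ->]; rewrite size_cat size_stairs //.
suff : size e <= sumn e by rewrite se; lia.
by elim: e {se} pe => //= x e IH /andP [hx /IH]; lia.
Qed.

Lemma factors_with_raise b k t : 0 < t -> factors_with b k ->
  factors_with (raise b t) k.+1.
Proof.
move=> ht [g [e [cg ag se pe ->]]].
exists (map succn g), (rcons e t); split.
- by rewrite /is_composition all_map; apply/allP.
- by rewrite all_map; apply/allP => x /(allP ag).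
- by rewrite size_rcons se.
- by rewrite all_rcons ht.
- by rewrite -/(stairs k.+1 _) stairs_rcons // /raise map_cat catA.
Qed.

Lemma factors_withS a k : factors_with a k.+1 ->
  exists b t, [/\ 0 < t, a = raise b t & factors_with b k].
Proof.
case=> g [e [cg ag se pe ->]].
case/lastP: e se pe => [|e0 t] //; rewrite size_rcons => -[se0].
rewrite all_rcons => /andP [ht pe0].
have g_pred : map succn (map predn g) = g.
  rewrite -map_comp -[RHS]map_id; apply/eq_in_map => x /(allP ag) /=; lia.
exists (map predn g ++ stairs k e0), t; split => //.
  by rewrite -/(stairs k.+1 _) stairs_rcons // /raise map_cat g_pred catA.
exists (map predn g), e0; split => //.
- by apply/allP => y /mapP [x /(allP ag) hx ->]; lia.
- by apply/allP => y /mapP [x /(allP ag) hx ->]; lia.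
Qed.

Lemma raise_inj b1 b2 t1 t2 : is_composition b1 -> is_composition b2 ->
  raise b1 t1 = raise b2 t2 -> b1 = b2 /\ t1 = t2.
Proof.
move=> c1 c2 E.
have count1 b t : is_composition b -> count (pred1 1) (raise b t) = t.
  move=> /allP cb; rewrite count_cat count_nseq /= mul1n count_map.
  rewrite (eq_in_count (a2 := pred0)) ?count_pred0 //.
  by move=> x /cb /=; rewrite eqSS; case: eqP => // ->.
have et : t1 = t2 by rewrite -(count1 b1 t1 c1) -(count1 b2 t2 c2) E.
subst t2; split => //.
have sz : size (map succn b1) = size (map succn b2).
  by have := congr1 size E; rewrite !size_cat; lia.
by move/eqP: E; rewrite eqseq_cat // => /andP [/eqP /(inj_map succn_inj)].
Qed.

Definition max_factor a k :=
  factors_with a k /\ forall k', factors_with a k' -> k' <= k.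

Lemma max_factor_uniq a k1 k2 : max_factor a k1 -> max_factor a k2 -> k1 = k2.
Proof. by case=> h1 m1 [h2 m2]; apply/eqP; rewrite eqn_leq m1 // m2. Qed.

Lemma ex_max (P : nat -> Prop) N : P 0 -> (forall k, P k -> k <= N) ->
  exists k, P k /\ forall k', P k' -> k' <= k.
Proof.
elim: N => [|N IH] p0 hb; first by exists 0; split => // k' /hb.
have [h | h] := classic (P N.+1); first by exists N.+1.
apply: IH => // k hk; have := hb k hk; rewrite leq_eqVlt => /orP [/eqP E|] //.
by move: hk; rewrite E.
Qed.

Lemma max_factor_ex a : is_composition a -> exists k, max_factor a k.
Proof. by move=> ca; apply: ex_max (factors_with0 ca) (@factors_with_leq_size a). Qed.

Lemma max_factor_raise b k t : is_composition b -> 0 < t -> max_factor b k ->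
  max_factor (raise b t) k.+1.
Proof.
move=> cb ht [h1 h2]; split; first exact: factors_with_raise.
case=> // k' /factors_withS [b' [t' [ht' E f']]].
have [eb _] := raise_inj (factors_with_composition f') cb (esym E).
by rewrite ltnS h2 // -eb.
Qed.

Lemma pure_max_factor a k : max_factor a k -> pure a <-> ~~ odd k.
Proof.
move=> mk; split; last by move=> ev; exists k; case: mk.
by case=> k' [f1 f2 ev]; rewrite (max_factor_uniq mk (conj f1 f2)).
Qed.

Lemma pure_raise b t : is_composition b -> 0 < t ->
  pure (raise b t) <-> ~ pure b.
Proof.
move=> cb ht; have [k mk] := max_factor_ex cb.
rewrite (pure_max_factor (max_factor_raise cb ht mk)) (pure_max_factor mk) /=.
by case: (odd k); split.
Qed.

Lemma inverting_raise b t : inverting (raise b t) -> inverting b.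
Proof.
move=> ic i hi hmax.
have hmax' : i.+1 <= \max_(x <- raise b t) x.
  move: hmax; rewrite !bigmax_geE //; try lia.
  by case/hasP => x hx hix; apply/hasP; exists x.+1; rewrite // mem_cat map_f.
have [s [u [hsu hu hs hut]]] := ic i.+1 (ltnW hi : 1 < i.+1) hmax'.
have hu' : u < size b.
  rewrite ltnNge; apply/negP => H; move: hut.
  by rewrite nth_cat size_map ltnNge H /= nth_nseq; case: ifP; lia.
have hs' : s < size b by lia.
move: hs hut; rewrite /raise !nth_cat size_map hs' hu' !(nth_map 0) // => -[hs] hut.
by exists s, u; split => //; lia.
Qed.

(** * Injectivity *)

Lemma same_order_succ b : same_order b (map succn b).
Proof.
apply: same_order_mono; first by rewrite size_map.
by move=> j k hj hk; rewrite /above !(nth_map 0) //; lia.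
Qed.

Lemma same_order_pred b : is_composition b -> same_order b (map predn b).
Proof.
move=> cb; apply: same_order_mono; first by rewrite size_map.
move=> j k hj hk; rewrite /above !(nth_map 0) //.
by have := nth_composition_gt0 cb hj; have := nth_composition_gt0 cb hk; lia.
Qed.

Definition pure_inverting (b : seq nat) :=
  [/\ is_composition b, pure b & inverting b].

Lemma pure_inverting_pad_order b1 b2 e1 : pure_inverting b1 -> pure_inverting b2 ->
  0 < e1 -> ~ same_order (b1 ++ nseq e1 0) b2.
Proof.
move=> [c1 p1 i1] [c2 p2 i2] he so; set B1 := b1 ++ nseq e1 0.
have le1 := inverting_le_nth c1 i1 so (or_introl he).
have so2 : same_order (b2 ++ nseq 0 0) (map succn B1).
  by rewrite cats0; apply: same_order_trans (same_order_succ B1); apply: same_order_sym.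
have pos : all (fun y => 0 < y) (map succn B1) by rewrite all_map; apply/allP.
have le2 := inverting_le_nth c2 i2 so2 (or_intror pos).
have le3 :=
  inverting_le_nth c1 i1 (same_order_trans so (same_order_pred c2)) (or_introl he).
have E : b2 = raise b1 e1.
  rewrite /raise -map_nseq -map_cat -/B1.
  have sz : size B1 = size b2 by case: so.
  apply: (eq_from_nth (x0 := 0)); rewrite ?size_map // => j hj.
  have := le1 j; have := le3 j; have := le2 j; rewrite cats0.
  rewrite -/B1 !(nth_map 0) ?sz //; have := nth_composition_gt0 c2 hj; lia.
by move: p2; rewrite E => /(pure_raise c1 he).
Qed.

Lemma eq_from_nth_le (s1 s2 : seq nat) : size s1 = size s2 ->
  (forall j, nth 0 s1 j <= nth 0 s2 j) -> (forall j, nth 0 s2 j <= nth 0 s1 j) ->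
  s1 = s2.
Proof.
move=> e h1 h2; apply: (eq_from_nth (x0 := 0)) => // j _.
by apply/eqP; rewrite eqn_leq h1 h2.
Qed.

Lemma pure_inverting_same_order b1 b2 e1 e2 :
  pure_inverting b1 -> pure_inverting b2 ->
  same_order (b1 ++ nseq e1 0) (b2 ++ nseq e2 0) ->
  b1 ++ nseq e1 0 = b2 ++ nseq e2 0.
Proof.
move=> h1 h2 so; have [c1 _ i1] := h1; have [c2 _ i2] := h2.
have sz : size (b1 ++ nseq e1 0) = size (b2 ++ nseq e2 0) by case: so.
have [e10 | he1] := posnP e1; have [e20 | he2] := posnP e2; subst.
- apply: eq_from_nth_le => //.
  + by apply: (inverting_le_nth c1 i1 so); right; rewrite cats0.
  + by apply: (inverting_le_nth c2 i2 (same_order_sym so)); right; rewrite cats0.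
- by rewrite cats0 in so; case: (pure_inverting_pad_order h2 h1 he2 (same_order_sym so)).
- by rewrite cats0 in so; case: (pure_inverting_pad_order h1 h2 he1 so).
- apply: eq_from_nth_le => //.
  + exact: (inverting_le_nth c1 i1 so (or_introl he1)).
  + exact: (inverting_le_nth c2 i2 (same_order_sym so) (or_introl he2)).
Qed.

Lemma nth_composition_size (s1 s2 : seq nat) m : is_composition s2 ->
  size s2 <= m -> (forall r, r < m -> nth 0 s1 r = nth 0 s2 r) ->
  size s2 <= size s1.
Proof.
move=> c2 s2m H; rewrite leqNgt; apply/negP => hlt.
have := H (size s1) (leq_trans hlt s2m); rewrite nth_default //.
by have := nth_composition_gt0 c2 hlt; lia.
Qed.

Lemma eq_composition_nth (l1 l2 : seq nat) m :
  is_composition l1 -> is_composition l2 -> size l1 <= m -> size l2 <= m ->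
  (forall r, r < m -> nth 0 l1 r = nth 0 l2 r) -> l1 = l2.
Proof.
move=> c1 c2 s1 s2 H.
have sz : size l1 = size l2.
  apply/eqP; rewrite eqn_leq (nth_composition_size c2 s2 H).
  by rewrite (nth_composition_size (s1 := l2) c1 s1) // => r /H.
apply: (eq_from_nth (x0 := 0)) => // r hr; apply: H; exact: leq_trans hr s1.
Qed.

Lemma pad0_inj b1 b2 e1 e2 : is_composition b1 -> is_composition b2 ->
  b1 ++ nseq e1 0 = b2 ++ nseq e2 0 -> b1 = b2.
Proof.
move=> c1 c2 E; apply: (eq_composition_nth (m := size b1 + size b2)) => //;
  first lia; first lia.
by move=> r _; have := congr1 (nth 0 ^~ r) E; rewrite /= !nth_pad0.
Qed.

Lemma phi_inj n d p q : in_PB n d p -> in_PB n d q -> phi p = phi q -> p = q.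
Proof.
case: p => l1 b1 [] /= /andP [cl1 so1] [cb1 pb1 ib1 _] _ _ _.
case: q => l2 b2 [] /= /andP [cl2 so2] [cb2 pb2 ib2 _] _ _ _ E.
have O1 := same_order_phi (p := (l1, b1)) so1.
have O2 := same_order_phi (p := (l2, b2)) so2.
rewrite /= E in O1.
have eb := pure_inverting_same_order (And3 cb1 pb1 ib1) (And3 cb2 pb2 ib2)
  (same_order_trans O1 (same_order_sym O2)).
have eb1 := pad0_inj cb1 cb2 eb; subst b2.
rewrite -/(pad_beta l1 b1) -/(pad_beta l2 b1) in eb E.
set b := pad_beta l1 b1 in eb E.
congr (_, _); apply: (eq_composition_nth (m := size b)) => //.
- by rewrite /b size_pad_beta leq_maxl.
- by rewrite eb size_pad_beta leq_maxl.
move=> r /rank_in_surj [j hj <-].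
have hj2 : j < size (pad_beta l2 b1) by rewrite -eb.
by have := congr1 (nth 0 ^~ j) E; rewrite /= !nth_phi //= -eb -/b => /addnI.
Qed.

Lemma in_C_phi n d p : in_PB n d p -> in_C n d (phi p).
Proof.
case: p => l b [] /= /andP [cl _] [cb _ _ _] <- sl sb.
split; [| by rewrite sumn_phi | by rewrite size_phi size_pad_beta /=; lia].
apply/(all_nthP 0) => j; rewrite size_phi => hj; rewrite nth_phi //=.
have [hjb | hjb] := ltnP j (size b).
  by rewrite /pad_beta nth_pad0; have := nth_composition_gt0 cb hjb; lia.
have := rank_in_lt_size hj; rewrite /pad_beta nth_pad0 nth_default // add0n.
rewrite size_pad_beta (maxn_idPl _) => [hr|]; first exact: nth_composition_gt0.
by move: hj; rewrite size_pad_beta /=; lia.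
Qed.

(** * Surjectivity *)

Definition lower v (c : seq nat) := [seq x - (v <= x) | x <- c].

Definition bump_first m (l : seq nat) :=
  [seq nth 0 l r + (r < m) | r <- iota 0 (maxn (size l) m)].

(* Lowering merges the values v - 1 and v; as every v - 1 precedes every v,
   the resulting ties are broken as the strict inequalities were. *)
Lemma same_order_lower c v : 0 < v ->
  (forall j k, j < size c -> k < size c -> nth 0 c k = v.-1 -> nth 0 c j = v -> k < j) ->
  same_order c (lower v c).
Proof.
move=> hv C; apply: same_order_mono; first by rewrite size_map.
move=> j k hj hk; rewrite /above !(nth_map 0) //.
have := C k j hk hj; rewrite -subn1.
by move: (nth 0 c j) (nth 0 c k) => x y; case: (leqP v x); case: (leqP v y); lia.
Qed.

Lemma rank_in_lt_count c v j : j < size c ->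
  (rank_in c j < count (fun x => v <= x) c) = (v <= nth 0 c j).
Proof.
move=> hj; rewrite -[c in count _ c](mkseq_nth 0) /mkseq count_map rank_inE.
case h: (v <= nth 0 c j).
  by apply: (@count_sub_lt _ _ _ _ j); rewrite ?mem_iota ?above_irr //= => l;
    rewrite /above /=; lia.
by apply/negbTE; rewrite -leqNgt; apply: sub_count => l /=; rewrite /above; lia.
Qed.

Lemma sumn_lower v c : 0 < v -> sumn (lower v c) + count (fun x => v <= x) c = sumn c.
Proof. by move=> hv; elim: c => //= x c <-; case: (leqP v x) => /=; lia. Qed.

Lemma lower_composition v c : 1 < v -> is_composition c -> is_composition (lower v c).
Proof.
move=> hv /allP cc; apply/allP => y /mapP [x /cc hx ->].
by case: (leqP v x) => /=; lia.
Qed.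

Lemma nth_bump_first m l r : nth 0 (bump_first m l) r = nth 0 l r + (r < m).
Proof.
have [hr | hr] := ltnP r (maxn (size l) m).
  by rewrite (nth_map 0) ?size_iota // nth_iota.
rewrite nth_default ?size_map ?size_iota // nth_default; last by move: hr; lia.
by move: hr; case: ltnP; lia.
Qed.

Lemma size_bump_first m l : size (bump_first m l) = maxn (size l) m.
Proof. by rewrite size_map size_iota. Qed.

Lemma bump_first_partition m l : is_partition l -> is_partition (bump_first m l).
Proof.
case/andP=> cl sl; apply/andP; split.
  apply/(all_nthP 0) => r; rewrite size_bump_first nth_bump_first => hr.
  have [hrl | hrl] := ltnP r (size l); first by have := nth_composition_gt0 cl hrl; lia.
  have -> : r < m by move: hr; rewrite leq_max ltnNge hrl.
  by rewrite addn1.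
rewrite sorted_map; apply: (sub_sorted _ (iota_sorted 0 _)) => x y hxy /=.
by have := nth_sorted_geq sl hxy; lia.
Qed.

Lemma phi_bump_first l b c v : 0 < v -> sorted geq l ->
  (forall j k, j < size c -> k < size c -> nth 0 c k = v.-1 -> nth 0 c j = v -> k < j) ->
  phi (l, b) = lower v c ->
  phi (bump_first (count (fun x => v <= x) c) l, b) = c.
Proof.
move=> hv sl C E; set m := count _ c.
have so := same_order_lower hv C.
have O := same_order_phi (p := (l, b)) sl; rewrite /= E in O.
have szc : size c = maxn (size l) (size b).
  by rewrite -(size_map (fun x => x - (v <= x))) -/(lower v c) -E size_phi size_pad_beta.
have pad : pad_beta (bump_first m l) b = pad_beta l b.
  rewrite /pad_beta size_bump_first; congr (_ ++ nseq _ _).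
  by have := count_size (fun x => v <= x) c; rewrite -/m szc; lia.
apply: (eq_from_nth (x0 := 0)).
  by rewrite size_phi /= pad size_pad_beta szc.
move=> j; rewrite size_phi /= pad => hj; rewrite nth_phi /= pad // nth_bump_first.
have hjc : j < size c by rewrite szc -size_pad_beta.
rewrite (same_order_rank hj O) -(same_order_rank hjc so) rank_in_lt_count //.
rewrite addnA (same_order_rank hjc so) -(same_order_rank hj O).
have := congr1 (nth 0 ^~ j) E; rewrite /= nth_phi // => ->.
rewrite (nth_map 0) //; case: leqP => /= h; rewrite ?subn0 ?addn0 //.
by rewrite subn1 addn1 prednK // (leq_trans hv h).
Qed.

Lemma not_inverting_witness c : ~ inverting c ->
  exists2 v, 1 < v & v <= \max_(x <- c) x /\
    forall j k, j < size c -> k < size c -> nth 0 c k = v.-1 -> nth 0 c j = v -> k < j.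
Proof.
move=> /not_all_ex_not [v]; rewrite -/(~ _) => hv.
have hv1 : 1 < v by apply: NNPP => H; apply: hv => a; case: (H a).
exists v => //; split; first by apply: NNPP => H; apply: hv => _ a; case: (H a).
move=> j k hj hk hkv hjv; rewrite ltnNge; apply/negP => hjk; apply: hv => _ _.
exists j, k; split => //; rewrite ltn_neqAle hjk andbT.
by apply/eqP => ejk; move: hkv; rewrite -ejk hjv; lia.
Qed.

Lemma ones_partition m : is_partition (nseq m 1).
Proof.
apply/andP; split; first by apply/allP => x /nseqP [->].
by case: m => //= m; elim: m => //= m ->; rewrite leqnn.
Qed.

Lemma phi_ones_raise b t : phi (nseq (size b + t) 1, b) = raise b t.
Proof.
have pad : pad_beta (nseq (size b + t) 1) b = b ++ nseq t 0.
  by rewrite /pad_beta size_nseq addKn.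
apply: (eq_from_nth (x0 := 0)).
  by rewrite size_phi /= pad !size_cat !size_nseq size_map.
move=> j; rewrite size_phi /= => hj; rewrite nth_phi //= nth_nseq.
have := rank_in_lt_size hj; rewrite pad size_cat size_nseq => -> /=.
rewrite nth_pad0 /raise nth_cat size_map; case: ltnP => hjb.
  by rewrite (nth_map 0) // addn1.
rewrite nth_default // nth_nseq; move: hj; rewrite pad size_cat size_nseq.
by case: (ltnP (j - size b) t); lia.
Qed.

Lemma phi_surj_inverting n c : is_composition c -> inverting c -> size c <= n ->
  exists2 p, in_PB n (sumn c) p & phi p = c.
Proof.
move=> cc ic sc; have [pc | npc] := classic (pure c).
  by exists ([::], c); [split | exact: phi_nil].
have [k mk] := max_factor_ex cc.
have ok : odd k by apply: contra_notT npc => /(pure_max_factor mk).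
case: k ok mk => // k _ [fk _].
have [b [t [ht Ec fb]]] := factors_withS fk.
have cb := factors_with_composition fb.
have pb : pure b by apply: NNPP => npb; apply: npc; rewrite Ec; apply/(pure_raise cb ht).
have ib : inverting b by apply: (@inverting_raise b t); rewrite -Ec.
have szc : size c = size b + t by rewrite Ec size_cat size_map size_nseq.
have Ephi : phi (nseq (size c) 1, b) = c by rewrite szc phi_ones_raise Ec.
exists (nseq (size c) 1, b) => //; split => //=.
- exact: ones_partition.
- by split => //; lia.
- by rewrite -[in RHS]Ephi sumn_phi.
- by rewrite size_nseq.
- lia.
Qed.

Lemma phi_surj_lower n c v l b : 0 < v -> size c <= n ->
  (forall j k, j < size c -> k < size c -> nth 0 c k = v.-1 -> nth 0 c j = v -> k < j) ->
  in_PB n (sumn (lower v c)) (l, b) -> phi (l, b) = lower v c ->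
  exists2 p, in_PB n (sumn c) p & phi p = c.
Proof.
move=> hv sc C [] /= pl hb _ sl sb E.
have Ephi := phi_bump_first hv (proj2 (andP pl)) C E.
exists (bump_first (count (fun x => v <= x) c) l, b) => //; split => //=.
- exact: bump_first_partition.
- by rewrite -[in RHS]Ephi sumn_phi.
- by rewrite size_bump_first geq_max sl (leq_trans (count_size _ _) sc).
Qed.

Lemma phi_surj n c : is_composition c -> size c <= n ->
  exists2 p, in_PB n (sumn c) p & phi p = c.
Proof.
have [N] := ubnP (sumn c); elim: N c => // N IH c hN cc sc.
have [ic | nic] := classic (inverting c); first exact: phi_surj_inverting.
have [v hv1 [hmax C]] := not_inverting_witness nic.
have hv : 0 < v by apply: ltnW.
have lower_lt : sumn (lower v c) < N.
  have : 0 < count (fun x => v <= x) c by rewrite -has_count -bigmax_geE.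
  by have := sumn_lower c hv; lia.
have size_lower : size (lower v c) <= n by rewrite size_map.
have [[l b] hPB E] := IH _ lower_lt (lower_composition hv1 cc) size_lower.
exact: phi_surj_lower hPB E.
Qed.

Theorem proposition3p2 (n d : nat) : 1 <= n ->
  [/\ (forall p, in_PB n d p -> in_C n d (phi p)),
      (forall p q, in_PB n d p -> in_PB n d q -> phi p = phi q -> p = q) &
      (forall c, in_C n d c -> exists2 p, in_PB n d p & phi p = c)].
Proof.
move=> _; split; [exact: in_C_phi | exact: phi_inj |].
by move=> c [cc <- sc]; exact: phi_surj.
Qed.
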